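(* Let $X,X_1,X_2,\dots$ be random variables in a sub-linear expectation space $(\Omega,\mathscr H,\hat{\mathbb E})$ with $\{X_n\}$ independent, $X_n\overset d=X$ for all $n$, and $\hat{\mathbb E}[X]=\hat{\mathcal E}[X]=0$. Let $S_n=\sum_{i=1}^nX_i$, $V_n^2=\sum_{i=1}^nX_i^2$, $l(x)=\hat{\mathbb E}[X^2\wedge x^2]$, and assume: (I) $\mathbb V(|X|\ge x)=o(x^{-2}l(x))$ as $x\to\infty$; (II) $\limsup_{x\to\infty}\hat{\mathbb E}[X^2\wedge x^2]/\hat{\mathcal E}[X^2\wedge x^2]<\infty$; (III) $\hat{\mathbb E}[(|X|-c)^+]\to0$ as $c\to\infty$; (IV) $x_n\to\infty$ and $x_n=o(\sqrt n)$. Let $b_0=\inf\{x\ge0:l(x)>0\}$ and $z_n=\inf\{s\ge b_0+1: l(s)/s^2\le x_n^2/n\}$. Then for every $0<\delta<1$, as $n\to\infty$, $$\mathbb V\big(S_n\ge x_nV_n,\ \delta nl(z_n)\le V_n^2\le 9nl(z_n)\big)\le\exp\Big\{-\frac{x_n^2}{2}+o(x_n^2)\Big\}.$$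
   Context: Sub-linear expectation space: $\mathscr H$ is a linear space of real functions on a measurable space $(\Omega,\mathcal F)$, closed under $\varphi(X_1,\dots,X_n)$ for $\varphi$ bounded continuous or locally Lipschitz with polynomial growth; $\hat{\mathbb E}:\mathscr H\to[-\infty,\infty]$ is monotone, constant preserving, sub-additive and positively homogeneous. $\hat{\mathcal E}[X]=-\hat{\mathbb E}[-X]$; $\mathbb V(A)=\inf\{\hat{\mathbb E}[\xi]:I_A\le\xi,\xi\in\mathscr H\}$. Independence: $\mathbf Y$ is independent of $\mathbf X$ if $\hat{\mathbb E}[\varphi(\mathbf X,\mathbf Y)]=\hat{\mathbb E}[\hat{\mathbb E}[\varphi(\mathbf x,\mathbf Y)]|_{\mathbf x=\mathbf X}]$ for all locally Lipschitz $\varphi$ of polynomial growth (whenever the relevant expectations are finite); $\{X_n\}$ is independent if $X_{i+1}$ is independent of $(X_1,\dots,X_i)$ for each $i$. $X_n\overset d=X$ means $\hat{\mathbb E}[\varphi(X_n)]=\hat{\mathbb E}[\varphi(X)]$ for all such $\varphi$. $a\wedge b=\min(a,b)$. *)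

From Stdlib Require Import Reals Lra.
From Coquelicot Require Import Coquelicot.
Open Scope R_scope.

(** Vectors of R^n are encoded as [nat -> R]; a function on R^n is a
    function [(nat -> R) -> R] depending only on the first n coordinates. *)
Definition depends_on (n : nat) (phi : (nat -> R) -> R) : Prop :=
  forall x y : nat -> R, (forall i, (i < n)%nat -> x i = y i) -> phi x = phi y.

Fixpoint nmax (n : nat) (x : nat -> R) : R :=
  match n with
  | O => 0
  | S k => Rmax (nmax k x) (Rabs (x k))
  end.

Definition vsub (x y : nat -> R) : nat -> R := fun i => x i - y i.

Definition Cb (n : nat) (phi : (nat -> R) -> R) : Prop :=
  depends_on n phi /\
  (exists M, forall x, Rabs (phi x) <= M) /\
  (forall x eps, 0 < eps -> exists d, 0 < d /\
      forall y, nmax n (vsub x y) < d -> Rabs (phi x - phi y) < eps).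

Definition Clip (n : nat) (phi : (nat -> R) -> R) : Prop :=
  depends_on n phi /\
  exists (C : R) (m : nat), 0 < C /\ forall x y,
    Rabs (phi x - phi y) <= C * (1 + nmax n x ^ m + nmax n y ^ m) * nmax n (vsub x y).

Definition Clip1 (phi : R -> R) : Prop :=
  exists (C : R) (m : nat), 0 < C /\ forall x y,
    Rabs (phi x - phi y) <= C * (1 + Rabs x ^ m + Rabs y ^ m) * Rabs (x - y).

Record SLE (Omega : Type) := {
  Hs : (Omega -> R) -> Prop;
  Eh : (Omega -> R) -> Rbar;
  Hs_lin : forall (a b : R) X Y, Hs X -> Hs Y -> Hs (fun w => a * X w + b * Y w);
  Hs_comp : forall (n : nat) (Xv : nat -> Omega -> R) (phi : (nat -> R) -> R),
      (forall i, (i < n)%nat -> Hs (Xv i)) -> (Cb n phi \/ Clip n phi) ->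
      Hs (fun w => phi (fun i => Xv i w));
  Eh_mono : forall X Y, Hs X -> Hs Y -> (forall w, X w <= Y w) -> Rbar_le (Eh X) (Eh Y);
  Eh_const : forall c : R, Eh (fun _ => c) = Finite c;
  Eh_subadd : forall X Y, Hs X -> Hs Y -> ex_Rbar_plus (Eh X) (Eh Y) ->
      Rbar_le (Eh (fun w => X w + Y w)) (Rbar_plus (Eh X) (Eh Y));
  Eh_poshom : forall (l : R) X, Hs X -> 0 < l ->
      Eh (fun w => l * X w) = Rbar_mult (Finite l) (Eh X)
}.
Arguments Hs {Omega}.
Arguments Eh {Omega}.

Definition Ecal {Omega} (S : SLE Omega) (X : Omega -> R) : Rbar :=
  Rbar_opp (Eh S (fun w => - X w)).

Definition Vcap {Omega} (S : SLE Omega) (A : Omega -> Prop) : Rbar :=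
  Rbar_glb (fun y => exists xi, Hs S xi /\
     (forall w, 0 <= xi w /\ (A w -> 1 <= xi w)) /\ y = Eh S xi).

Definition upd (x : nat -> R) (i : nat) (v : R) : nat -> R :=
  fun j => if Nat.eqb j i then v else x j.

(** {Xs 0, Xs 1, ...} (i.e. X_1, X_2, ...) is independent: for each i,
    Xs i is independent of (Xs 0, ..., Xs (i-1)). *)
Definition indep_seq {Omega} (S : SLE Omega) (Xs : nat -> Omega -> R) : Prop :=
  forall (i : nat) (phi : (nat -> R) -> R), Clip (Datatypes.S i) phi ->
    let h := fun x : nat -> R => Eh S (fun w => phi (upd x i (Xs i w))) in
    (forall x, is_finite (h x)) ->
    Hs S (fun w => real (h (fun j => Xs j w))) ->
    Eh S (fun w => phi (fun j => Xs j w)) = Eh S (fun w => real (h (fun j => Xs j w))).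

Definition ident_distr {Omega} (S : SLE Omega) (Y X : Omega -> R) : Prop :=
  forall phi : R -> R, Clip1 phi -> Eh S (fun w => phi (Y w)) = Eh S (fun w => phi (X w)).

(** l(x) = \hat E[X^2 /\ x^2] (finite by monotonicity/constant preservation) *)
Definition lfun {Omega} (S : SLE Omega) (X : Omega -> R) (x : R) : R :=
  real (Eh S (fun w => Rmin (X w ^ 2) (x ^ 2))).

Definition lcal {Omega} (S : SLE Omega) (X : Omega -> R) (x : R) : R :=
  real (Ecal S (fun w => Rmin (X w ^ 2) (x ^ 2))).

Definition b0 {Omega} (S : SLE Omega) (X : Omega -> R) : R :=
  real (Glb_Rbar (fun x => 0 <= x /\ 0 < lfun S X x)).

Definition zseq {Omega} (S : SLE Omega) (X : Omega -> R) (xs : nat -> R) (n : nat) : R :=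
  real (Glb_Rbar (fun s => b0 S X + 1 <= s /\ lfun S X s / s ^ 2 <= xs n ^ 2 / INR n)).

Fixpoint psum (f : nat -> R) (n : nat) : R :=
  match n with O => 0 | Datatypes.S k => psum f k + f k end.

Definition Ssum {Omega} (Xs : nat -> Omega -> R) (n : nat) (w : Omega) : R :=
  psum (fun i => Xs i w) n.
Definition V2sum {Omega} (Xs : nat -> Omega -> R) (n : nat) (w : Omega) : R :=
  psum (fun i => Xs i w ^ 2) n.

(* With [c = (1+eta)/2] and [lam = x / sqrt y], the event
   [{x sqrt V_n <= S_n, y <= V_n^2 <= (1+eta) y}] forces
   [exp (lam S_n - c lam^2 V_n^2) >= exp (x^2 - (1+eta)^2 x^2 / 2)], so its capacity is at most
   [exp (-x^2 + (1+eta)^2 x^2/2)] times the sublinear expectation of that exponential.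
   By independence this expectation is [m^n] with [m = E exp (lam X - c lam^2 X^2)], and the
   elementary bound [exp (u - c u^2) <= 1 + u] for [u >= -eta/2] together with [E X = 0] gives
   [m <= 1 + 2 lam E (|X| - eta/(4 lam))^+].  Conditions (I) and (III) make this truncated
   mean [o(l(a)/a)], and the choice of [z_n] makes [n l(z_n)] comparable to [x_n^2 z_n^2],
   so [m^n = exp (o(x_n^2))].  Finally [[delta n l(z_n), 9 n l(z_n)]] is covered by a fixed
   number of cells of ratio [1+eta]. *)

From Stdlib Require Import Reals.
From Coquelicot Require Import Coquelicot.
From Stdlib Require Import Lra Lia Psatz FunctionalExtensionality Classical_Prop.
Open Scope R_scope.

Arguments Hs_lin {Omega}. Arguments Hs_comp {Omega}. Arguments Eh_mono {Omega}.
Arguments Eh_const {Omega}. Arguments Eh_subadd {Omega}. Arguments Eh_poshom {Omega}.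

Lemma nmax_ge0 n x : 0 <= nmax n x.
Proof. induction n; simpl; [lra | eapply Rle_trans; [exact IHn | apply Rmax_l]]. Qed.

Lemma nmax_ge n x i : (i < n)%nat -> Rabs (x i) <= nmax n x.
Proof.
  induction n as [|n IHn]; intros Hi; [lia|]. simpl.
  destruct (Nat.eq_dec i n) as [->|Hne]; [apply Rmax_r|].
  eapply Rle_trans; [apply IHn; lia | apply Rmax_l].
Qed.

Lemma nmax_const1 t : nmax 1 (fun _ => t) = Rabs t.
Proof. simpl. apply Rmax_right, Rabs_pos. Qed.

Lemma psum_ext f g n : (forall i, (i < n)%nat -> f i = g i) -> psum f n = psum g n.
Proof. induction n; intros H; simpl; [reflexivity | rewrite IHn, H; auto]. Qed.

Lemma psum_nonneg f n : (forall i, 0 <= f i) -> 0 <= psum f n.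
Proof. intros Hf. induction n; simpl; [lra | specialize (Hf n); lra]. Qed.

Lemma psum_ge_term f n k : (forall i, 0 <= f i) -> (k < n)%nat -> f k <= psum f n.
Proof.
  intros Hf. induction n as [|n IHn]; intros Hk; [lia|]. simpl.
  destruct (Nat.eq_dec k n) as [->|Hne].
  - assert (H := psum_nonneg f n Hf). lra.
  - assert (H := IHn ltac:(lia)). specialize (Hf n). lra.
Qed.

Lemma exp_le a b : a <= b -> exp a <= exp b.
Proof. intros [H|H]; [left; apply exp_increasing, H | subst; lra]. Qed.

Lemma exp_lipschitz a b B : a <= B -> b <= B -> Rabs (exp a - exp b) <= exp B * Rabs (a - b).
Proof.
  assert (Hone : forall u v, u <= v -> v <= B -> exp v - exp u <= exp B * (v - u)).
  { intros u v Huv HvB.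
    assert (E : exp u = exp (u - v) * exp v) by (rewrite <- exp_plus; f_equal; ring).
    assert (H1 := exp_ineq1_le (u - v)). assert (H2 := exp_le v B HvB).
    assert (0 < exp v) by apply exp_pos. rewrite E. nra. }
  intros Ha Hb. destruct (Rle_dec a b) as [Hab|Hab].
  - assert (H := exp_le a b Hab). rewrite !Rabs_left1 by lra. assert (H' := Hone a b Hab Hb). lra.
  - assert (H := exp_le b a ltac:(lra)). rewrite !Rabs_right by lra. apply Hone; lra.
Qed.

Lemma Rmax_lipschitz a b c : Rabs (Rmax a c - Rmax b c) <= Rabs (a - b).
Proof. unfold Rmax; destruct (Rle_dec a c), (Rle_dec b c); unfold Rabs; repeat destruct Rcase_abs; lra. Qed.

Lemma Rmin_lipschitz a b c : Rabs (Rmin a c - Rmin b c) <= Rabs (a - b).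
Proof. unfold Rmin; destruct (Rle_dec a c), (Rle_dec b c); unfold Rabs; repeat destruct Rcase_abs; lra. Qed.

Lemma Clip1_of_Clip (phi : R -> R) : Clip 1 (fun v => phi (v 0%nat)) -> Clip1 phi.
Proof.
  intros [_ [C [m [HC Hphi]]]]. exists C, m. split; auto. intros x y.
  specialize (Hphi (fun _ => x) (fun _ => y)). unfold vsub in Hphi.
  rewrite !nmax_const1 in Hphi. exact Hphi.
Qed.

Lemma Clip1_of_lipschitz (phi : R -> R) :
  (forall x y, Rabs (phi x - phi y) <= Rabs (x - y)) -> Clip1 phi.
Proof.
  intros H. exists 1, 0%nat. split; [lra|]. intros x y. simpl.
  specialize (H x y). assert (0 <= Rabs (x - y)) by apply Rabs_pos. nra.
Qed.

Lemma Clip1_sqr_min b : Clip1 (fun t => Rmin (t ^ 2) (b ^ 2)).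
Proof.
  exists 1, 1%nat. split; [lra|]. intros x y.
  eapply Rle_trans; [apply Rmin_lipschitz|].
  replace (x ^ 2 - y ^ 2) with ((x + y) * (x - y)) by ring. rewrite Rabs_mult.
  apply Rmult_le_compat_r; [apply Rabs_pos|].
  assert (H := Rabs_triang x y). simpl. lra.
Qed.

Section SublinearExpectation.

Context {Omega : Type} (S : SLE Omega).

Lemma Hs_const (c : R) : Hs S (fun _ => c).
Proof.
  apply (Hs_comp S 0 (fun _ _ => 0) (fun _ => c)); [intros; lia|].
  left. split; [|split].
  - intros x y _. reflexivity.
  - exists (Rabs c). intros. apply Rle_refl.
  - intros x eps He. exists 1. split; [lra|]. intros. rewrite Rminus_diag, Rabs_R0. lra.
Qed.

Lemma Hs_clip1 (Y : Omega -> R) (phi : R -> R) : Hs S Y -> Clip1 phi -> Hs S (fun w => phi (Y w)).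
Proof.
  intros HY [C [m [HC Hphi]]].
  apply (Hs_comp S 1 (fun _ => Y) (fun v => phi (v 0%nat))); [auto|].
  right. split.
  - intros x y H. rewrite (H 0%nat); [reflexivity | lia].
  - exists C, m. split; auto. intros x y. simpl. rewrite !Rmax_right by apply Rabs_pos. apply Hphi.
Qed.

Lemma Hs_plus Y Z : Hs S Y -> Hs S Z -> Hs S (fun w => Y w + Z w).
Proof.
  intros HY HZ. assert (H := Hs_lin S 1 1 Y Z HY HZ).
  replace (fun w => Y w + Z w) with (fun w => 1 * Y w + 1 * Z w); auto.
  apply functional_extensionality. intros. ring.
Qed.

Lemma Hs_scal Y a : Hs S Y -> Hs S (fun w => a * Y w).
Proof.
  intros HY. assert (H := Hs_lin S a 0 Y Y HY HY).
  replace (fun w => a * Y w) with (fun w => a * Y w + 0 * Y w); auto.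
  apply functional_extensionality. intros. ring.
Qed.

Lemma Hs_psum (F : nat -> Omega -> R) K :
  (forall k, Hs S (F k)) -> Hs S (fun w => psum (fun k => F k w) K).
Proof. intros HF. induction K; simpl; [apply Hs_const | apply Hs_plus; auto]. Qed.

Lemma Eh_le_const Y b : Hs S Y -> (forall w, Y w <= b) -> Rbar_le (Eh S Y) (Finite b).
Proof. intros HY H. rewrite <- (Eh_const S b). apply Eh_mono; auto. apply Hs_const. Qed.

Lemma Eh_ge_const Y a : Hs S Y -> (forall w, a <= Y w) -> Rbar_le (Finite a) (Eh S Y).
Proof. intros HY H. rewrite <- (Eh_const S a). apply Eh_mono; auto. apply Hs_const. Qed.

Lemma Eh_bounded Y a b : Hs S Y -> (forall w, a <= Y w <= b) ->
  Eh S Y = Finite (real (Eh S Y)) /\ a <= real (Eh S Y) <= b.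
Proof.
  intros HY H.
  assert (H1 := Eh_ge_const Y a HY (fun w => proj1 (H w))).
  assert (H2 := Eh_le_const Y b HY (fun w => proj2 (H w))).
  destruct (Eh S Y); simpl in *; try contradiction; auto.
Qed.

Lemma Eh_le_trans Y Z a : Hs S Y -> Hs S Z -> (forall w, Y w <= Z w) ->
  Rbar_le (Eh S Z) (Finite a) -> Rbar_le (Eh S Y) (Finite a).
Proof. intros. eapply Rbar_le_trans; [apply Eh_mono; eauto | auto]. Qed.

Lemma Eh_plus_le Y Z a b : Hs S Y -> Hs S Z ->
  Rbar_le (Eh S Y) (Finite a) -> Rbar_le (Eh S Z) (Finite b) ->
  Rbar_le (Eh S (fun w => Y w + Z w)) (Finite (a + b)).
Proof.
  intros HY HZ H1 H2.
  assert (Hex : ex_Rbar_plus (Eh S Y) (Eh S Z)).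
  { destruct (Eh S Y), (Eh S Z); simpl in *; auto. }
  eapply Rbar_le_trans; [apply Eh_subadd; auto|].
  destruct (Eh S Y), (Eh S Z); simpl in *; try contradiction; auto; lra.
Qed.

Lemma Eh_scal_le Y l a : Hs S Y -> 0 < l ->
  Rbar_le (Eh S Y) (Finite a) -> Rbar_le (Eh S (fun w => l * Y w)) (Finite (l * a)).
Proof.
  intros HY Hl H. rewrite Eh_poshom; auto.
  destruct (Eh S Y); simpl in *; try contradiction.
  - apply Rmult_le_compat_l; lra.
  - unfold Rbar_mult, Rbar_mult'. destruct (Rle_dec 0 l) as [Hl'|]; [|lra].
    destruct (Rle_lt_or_eq_dec 0 l Hl'); simpl; auto. lra.
Qed.

Lemma Eh_psum_le (F : nat -> Omega -> R) K B :
  (forall k, Hs S (F k)) -> (forall k, (k < K)%nat -> Rbar_le (Eh S (F k)) (Finite B)) ->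
  Rbar_le (Eh S (fun w => psum (fun k => F k w) K)) (Finite (INR K * B)).
Proof.
  intros HF HB. induction K as [|K IHK]; simpl.
  - rewrite Eh_const. simpl. lra.
  - replace (match K with 0%nat => 1 | Datatypes.S _ => INR K + 1 end * B)
      with (INR K * B + B) by (destruct K; simpl; ring).
    apply Eh_plus_le; [apply Hs_psum; auto | auto | apply IHK; auto | apply HB; lia].
Qed.

Definition dominates (A : Omega -> Prop) (xi : Omega -> R) :=
  Hs S xi /\ (forall w, 0 <= xi w /\ (A w -> 1 <= xi w)).

Lemma Vcap_le_Eh A xi a : dominates A xi ->
  Rbar_le (Eh S xi) (Finite a) -> Rbar_le (Vcap S A) (Finite a).
Proof.
  intros [H1 H2] H. unfold Vcap, Rbar_glb. destruct (Rbar_ex_glb _) as [l [Hlb Hg]]. simpl.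
  eapply Rbar_le_trans; [|apply H]. apply Hlb. exists xi; auto.
Qed.

Lemma le_affine_Vcap A (e c b r : R) : 0 < b ->
  Rbar_le (Vcap S A) (Finite r) ->
  (forall xi v, dominates A xi -> Eh S xi = Finite v -> e <= c + b * v) ->
  e <= c + b * r.
Proof.
  intros Hb HV H.
  destruct (Rle_dec e (c + b * r)) as [|Hn]; auto. exfalso.
  unfold Vcap, Rbar_glb in HV. destruct (Rbar_ex_glb _) as [l [Hlb Hg]]. simpl in HV.
  assert (Hq : Rbar_le (Finite ((e - c) / b)) l).
  { apply Hg. intros y [xi [Hxi [Ha Hy]]]. subst y.
    assert (H0 : Rbar_le (Finite 0) (Eh S xi)) by (apply Eh_ge_const; auto; intros w; apply Ha).
    destruct (Eh S xi) eqn:E; simpl in *; auto.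
    specialize (H xi r0 (conj Hxi Ha) E).
    apply Rmult_le_reg_l with b; auto. field_simplify; lra. }
  assert (Hr : Rbar_le (Finite ((e - c) / b)) (Finite r)) by (eapply Rbar_le_trans; eauto).
  simpl in Hr. apply Rmult_le_compat_l with (r := b) in Hr; [|lra].
  field_simplify in Hr; lra.
Qed.

End SublinearExpectation.

Lemma pow2_unbounded y : exists K : nat, y <= 2 ^ K.
Proof.
  destruct (INR_unbounded y) as [K HK]. exists K.
  assert (H := poly K 1 ltac:(lra)). replace (1 + 1) with 2 in H by ring. lra.
Qed.

Lemma telescope_geometric (E r : nat -> R) (e q : R) (K : nat) :
  0 <= e -> 0 <= q < 1 -> 0 <= r 0%nat ->
  (forall k, E k <= e * r k + E (S k)) -> (forall k, r (S k) <= q * r k) ->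
  E 0%nat <= e * r 0%nat / (1 - q) + E K.
Proof.
  intros He Hq Hr0 HE Hr.
  assert (Hq1 : 1 - q <> 0) by lra.
  assert (Hgeo : forall k, r k <= q ^ k * r 0%nat).
  { induction k; simpl; [lra|]. specialize (Hr k). nra. }
  assert (Hsum : forall k, E 0%nat <= e * r 0%nat * (1 - q ^ k) / (1 - q) + E k).
  { intros k. induction k as [|k IHk]; simpl.
    - replace (e * r 0%nat * (1 - 1) / (1 - q)) with 0 by (field; auto). lra.
    - specialize (HE k). specialize (Hgeo k).
      assert (e * r k <= e * (q ^ k * r 0%nat)) by (apply Rmult_le_compat_l; lra).
      replace (e * r 0%nat * (1 - q * q ^ k) / (1 - q))
        with (e * r 0%nat * (1 - q ^ k) / (1 - q) + e * (q ^ k * r 0%nat)) by (field; auto).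
      lra. }
  eapply Rle_trans; [apply (Hsum K)|].
  assert (0 <= q ^ K) by (apply pow_le; lra).
  assert (e * r 0%nat * (1 - q ^ K) / (1 - q) <= e * r 0%nat / (1 - q)); [|lra].
  unfold Rdiv. apply Rmult_le_compat_r; [apply Rlt_le, Rinv_0_lt_compat; lra|].
  assert (0 <= e * r 0%nat) by nra. nra.
Qed.

Lemma Glb_Rbar_spec (E : R -> Prop) a s0 : (forall s, E s -> a <= s) -> E s0 ->
  let g := real (Glb_Rbar E) in
  a <= g /\ (forall s, E s -> g <= s) /\ (forall s, g < s -> exists t, E t /\ t < s).
Proof.
  intros Ha Hs0 g. destruct (Glb_Rbar_correct E) as [Hlb Hgr].
  assert (Hlo : Rbar_le (Finite a) (Glb_Rbar E)) by (apply Hgr; exact Ha).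
  assert (Hup : Rbar_le (Glb_Rbar E) (Finite s0)) by (apply Hlb; exact Hs0).
  assert (Eg : Glb_Rbar E = Finite g) by (unfold g; destruct (Glb_Rbar E); simpl in *; tauto).
  rewrite Eg in Hlb, Hgr, Hlo. split; [exact Hlo | split; [intros s Hs; exact (Hlb s Hs)|]].
  intros s Hs. apply NNPP. intros Hn.
  assert (Hle : Rbar_le (Finite s) (Finite g)).
  { apply Hgr. intros t Ht. simpl. apply Rnot_lt_le. intros Hts. apply Hn. exists t; auto. }
  simpl in Hle. lra.
Qed.

Definition excess (c t : R) := Rmax (Rabs t - c) 0.

Definition Etail {Omega} (S : SLE Omega) (X : Omega -> R) (c : R) :=
  real (Eh S (fun w => excess c (X w))).

Lemma excess_lipschitz c x y : Rabs (excess c x - excess c y) <= Rabs (x - y).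
Proof.
  unfold excess. eapply Rle_trans; [apply Rmax_lipschitz|].
  replace (Rabs x - c - (Rabs y - c)) with (Rabs x - Rabs y) by ring. apply Rabs_triang_inv2.
Qed.

Lemma Clip1_excess c : Clip1 (excess c).
Proof. apply Clip1_of_lipschitz, excess_lipschitz. Qed.

Lemma Clip1_excess_capped c : Clip1 (fun t => Rmin (excess c t) c).
Proof.
  apply Clip1_of_lipschitz. intros x y.
  eapply Rle_trans; [apply Rmin_lipschitz | apply excess_lipschitz].
Qed.

Lemma excess_split c t : 0 < c -> excess c t <= Rmin (excess c t) c + excess (2 * c) t.
Proof. intros Hc. unfold excess, Rmin, Rmax. repeat destruct Rle_dec; lra. Qed.

Section TruncatedMoments.

Context {Omega : Type} (S : SLE Omega) (X : Omega -> R) (HX : Hs S X).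

Let Hs_sqr_min c : Hs S (fun w => Rmin (X w ^ 2) (c ^ 2)).
Proof. apply (Hs_clip1 S X (fun t => Rmin (t ^ 2) (c ^ 2))); [exact HX | apply Clip1_sqr_min]. Qed.

Let Hs_excess c : Hs S (fun w => excess c (X w)).
Proof. apply Hs_clip1; [exact HX | apply Clip1_excess]. Qed.

Let Hs_excess_capped c : Hs S (fun w => Rmin (excess c (X w)) c).
Proof. apply (Hs_clip1 S X (fun t => Rmin (excess c t) c)); [exact HX | apply Clip1_excess_capped]. Qed.

Lemma lfun_spec x :
  Eh S (fun w => Rmin (X w ^ 2) (x ^ 2)) = Finite (lfun S X x) /\ 0 <= lfun S X x <= x ^ 2.
Proof.
  apply Eh_bounded; [apply Hs_sqr_min|].
  intros w. split; [apply Rmin_glb; apply pow2_ge_0 | apply Rmin_r].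
Qed.

Lemma lfun_abs x : lfun S X (Rabs x) = lfun S X x.
Proof. unfold lfun. rewrite pow2_abs. reflexivity. Qed.

Lemma lfun_mono a b : 0 <= a <= b -> lfun S X a <= lfun S X b.
Proof.
  intros Hab. destruct (lfun_spec a) as [Ea _]. destruct (lfun_spec b) as [Eb _].
  assert (H := Eh_mono S _ _ (Hs_sqr_min a) (Hs_sqr_min b)).
  rewrite Ea, Eb in H. apply H. intros w. unfold Rmin.
  destruct (Rle_dec (X w ^ 2) (a ^ 2)), (Rle_dec (X w ^ 2) (b ^ 2)); nra.
Qed.

Lemma lfun_scale s t : 0 < s <= t -> s ^ 2 * lfun S X t <= t ^ 2 * lfun S X s.
Proof.
  intros Hst. destruct (lfun_spec s) as [Es _]. destruct (lfun_spec t) as [Et _].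
  set (k := t ^ 2 / s ^ 2).
  assert (Hk : 1 <= k).
  { unfold k. apply Rmult_le_reg_r with (s ^ 2); [nra|]. unfold Rdiv; field_simplify; nra. }
  assert (H : Rbar_le (Eh S (fun w => Rmin (X w ^ 2) (t ^ 2))) (Finite (k * lfun S X s))).
  { apply (Eh_le_trans S _ (fun w => k * Rmin (X w ^ 2) (s ^ 2)));
      [apply Hs_sqr_min | apply Hs_scal, Hs_sqr_min | |].
    - intros w. assert (0 <= X w ^ 2) by apply pow2_ge_0.
      assert (Hks : k * s ^ 2 = t ^ 2) by (unfold k; field; lra).
      unfold Rmin. destruct (Rle_dec (X w ^ 2) (s ^ 2)), (Rle_dec (X w ^ 2) (t ^ 2)); nra.
    - apply Eh_scal_le; [apply Hs_sqr_min | lra | rewrite Es; simpl; lra]. }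
  rewrite Et in H. simpl in H.
  apply Rmult_le_compat_l with (r := s ^ 2) in H; [|nra].
  replace (s ^ 2 * (k * lfun S X s)) with (t ^ 2 * lfun S X s) in H by (unfold k; field; lra).
  exact H.
Qed.

Lemma lfun_double b r : 0 < b -> Rbar_le (Vcap S (fun w => b <= Rabs (X w))) (Finite r) ->
  lfun S X (2 * b) <= lfun S X b + 3 * b ^ 2 * r.
Proof.
  intros Hb HV. apply (le_affine_Vcap S (fun w => b <= Rabs (X w)) _ _ (3 * b ^ 2) r); [nra | exact HV |].
  intros xi v [Hxi Ha] Ev.
  destruct (lfun_spec (2 * b)) as [E2 _]. destruct (lfun_spec b) as [E1 _].
  assert (H : Rbar_le (Eh S (fun w => Rmin (X w ^ 2) ((2 * b) ^ 2)))
                (Finite (lfun S X b + 3 * b ^ 2 * v))).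
  { apply (Eh_le_trans S _ (fun w => Rmin (X w ^ 2) (b ^ 2) + 3 * b ^ 2 * xi w));
      [apply Hs_sqr_min | apply Hs_plus; [apply Hs_sqr_min | apply Hs_scal; exact Hxi] | |].
    - intros w. destruct (Ha w) as [Ha1 Ha2]. rewrite <- (pow2_abs (X w)).
      assert (0 <= Rabs (X w)) by apply Rabs_pos.
      destruct (Rle_dec b (Rabs (X w))) as [Hl|Hl]; [specialize (Ha2 Hl)|];
        unfold Rmin; destruct (Rle_dec (Rabs (X w) ^ 2) (b ^ 2)),
                              (Rle_dec (Rabs (X w) ^ 2) ((2 * b) ^ 2)); nra.
    - apply Eh_plus_le; [apply Hs_sqr_min | apply Hs_scal; exact Hxi | rewrite E1; simpl; lra |].
      apply Eh_scal_le; [exact Hxi | nra | rewrite Ev; simpl; lra]. }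
  rewrite E2 in H. exact H.
Qed.

Lemma Eh_excess_capped_le b r : 0 < b -> Rbar_le (Vcap S (fun w => b <= Rabs (X w))) (Finite r) ->
  Rbar_le (Eh S (fun w => Rmin (excess b (X w)) b)) (Finite (b * r)).
Proof.
  intros Hb HV.
  destruct (Eh_bounded S _ 0 b (Hs_excess_capped b)) as [E _].
  { intros w. unfold excess. split; [apply Rmin_glb; [apply Rmax_r | lra] | apply Rmin_r]. }
  rewrite E. simpl. replace (b * r) with (0 + b * r) by ring.
  apply (le_affine_Vcap S _ _ _ _ _ Hb HV). intros xi v [Hxi Ha] Ev.
  assert (H : Rbar_le (Eh S (fun w => Rmin (excess b (X w)) b)) (Finite (b * v))).
  { apply (Eh_le_trans S _ (fun w => b * xi w)); [apply Hs_excess_capped | apply Hs_scal; exact Hxi | |].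
    - intros w. destruct (Ha w) as [Ha1 Ha2]. destruct (Rle_dec b (Rabs (X w))) as [Hl|Hl].
      + specialize (Ha2 Hl). eapply Rle_trans; [apply Rmin_r | nra].
      + unfold excess. rewrite Rmax_right by lra. rewrite Rmin_left by lra. nra.
    - apply Eh_scal_le; [exact Hxi | exact Hb | rewrite Ev; simpl; lra]. }
  rewrite E in H. simpl in H. lra.
Qed.

Hypothesis Htail : forall eps, 0 < eps -> exists M, forall c, M <= c ->
  Rbar_le (Eh S (fun w => excess c (X w))) (Finite eps).

Lemma Etail_spec c : Eh S (fun w => excess c (X w)) = Finite (Etail S X c) /\ 0 <= Etail S X c.
Proof.
  destruct (Htail 1 ltac:(lra)) as [M HM]. set (m := Rmax M c).
  assert (Hm : M <= m /\ c <= m) by (split; [apply Rmax_l | apply Rmax_r]).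
  assert (Hup : Rbar_le (Eh S (fun w => excess c (X w))) (Finite (1 + (m - c)))).
  { apply (Eh_le_trans S _ (fun w => excess m (X w) + (m - c)));
      [apply Hs_excess | apply Hs_plus; [apply Hs_excess | apply Hs_const] | |].
    - intros w. unfold excess, Rmax. repeat destruct Rle_dec; lra.
    - apply Eh_plus_le; [apply Hs_excess | apply Hs_const | apply HM; tauto |].
      rewrite Eh_const. apply Rle_refl. }
  assert (Hlo : Rbar_le (Finite 0) (Eh S (fun w => excess c (X w))))
    by (apply Eh_ge_const; [apply Hs_excess | intros; apply Rmax_r]).
  unfold Etail. destruct (Eh S (fun w => excess c (X w))); simpl in *; tauto.
Qed.

Lemma Etail_antitone c1 c2 : c1 <= c2 -> Etail S X c2 <= Etail S X c1.
Proof.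
  intros H. destruct (Etail_spec c1) as [E1 _]. destruct (Etail_spec c2) as [E2 _].
  assert (Hm := Eh_mono S _ _ (Hs_excess c2) (Hs_excess c1)).
  rewrite E1, E2 in Hm. apply Hm. intros w. unfold excess, Rmax. repeat destruct Rle_dec; lra.
Qed.

Lemma Etail_doubling b r : 0 < b -> Rbar_le (Vcap S (fun w => b <= Rabs (X w))) (Finite r) ->
  Etail S X b <= b * r + Etail S X (2 * b).
Proof.
  intros Hb HV.
  assert (Hcap := Eh_excess_capped_le b r Hb HV).
  destruct (Etail_spec b) as [E1 _]. destruct (Etail_spec (2 * b)) as [E2 _].
  assert (H : Rbar_le (Eh S (fun w => excess b (X w))) (Finite (b * r + Etail S X (2 * b)))).
  { apply (Eh_le_trans S _ (fun w => Rmin (excess b (X w)) b + excess (2 * b) (X w)));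
      [apply Hs_excess | apply Hs_plus; [apply Hs_excess_capped | apply Hs_excess] | |].
    - intros w. apply excess_split, Hb.
    - apply Eh_plus_le; [apply Hs_excess_capped | apply Hs_excess | exact Hcap | rewrite E2; apply Rle_refl]. }
  rewrite E1 in H. exact H.
Qed.

Lemma Etail_lfun_doubling b e : 0 < b -> 0 <= e ->
  Rbar_le (Vcap S (fun w => b <= Rabs (X w))) (Finite (e * (lfun S X b / b ^ 2))) ->
  Etail S X b <= e * (lfun S X b / b) + Etail S X (2 * b) /\
  lfun S X (2 * b) / (2 * b) <= (1 + 3 * e) / 2 * (lfun S X b / b).
Proof.
  intros Hb He HV.
  replace (e * (lfun S X b / b)) with (b * (e * (lfun S X b / b ^ 2))) by (field; lra).
  split; [apply Etail_doubling; [exact Hb | exact HV]|].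
  assert (Hd := lfun_double b _ Hb HV).
  replace (3 * b ^ 2 * (e * (lfun S X b / b ^ 2))) with (3 * e * lfun S X b) in Hd by (field; lra).
  apply Rmult_le_reg_r with (2 * b); [lra|].
  replace (lfun S X (2 * b) / (2 * b) * (2 * b)) with (lfun S X (2 * b)) by (field; lra).
  replace ((1 + 3 * e) / 2 * (lfun S X b / b) * (2 * b)) with ((1 + 3 * e) * lfun S X b)
    by (field; lra).
  lra.
Qed.

Lemma Etail_little_o :
  (forall eps, 0 < eps -> exists M, forall x, M <= x ->
     Rbar_le (Vcap S (fun w => x <= Rabs (X w))) (Finite (eps * (lfun S X x / x ^ 2)))) ->
  forall x1, 0 < x1 -> 0 < lfun S X x1 ->
  forall eps, 0 < eps -> exists A0, 0 < A0 /\ forall a, A0 <= a ->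
    Etail S X a <= eps * (lfun S X a / a).
Proof.
  intros Hcap x1 Hx1 Hl1 eps Heps.
  set (e1 := Rmin (eps / 8) (1 / 6)).
  assert (He1 : 0 < e1 <= eps / 8 /\ e1 <= 1 / 6)
    by (unfold e1; split; [split; [apply Rmin_glb_lt; lra | apply Rmin_l] | apply Rmin_r]).
  destruct (Hcap e1 ltac:(lra)) as [M HM].
  exists (Rmax M (Rmax x1 1)).
  assert (H1 := Rmax_l M (Rmax x1 1)). assert (H2 := Rmax_r M (Rmax x1 1)).
  assert (H3 := Rmax_l x1 1). assert (H4 := Rmax_r x1 1).
  split; [lra|]. intros a Ha.
  assert (Hla : 0 < lfun S X a) by (eapply Rlt_le_trans; [exact Hl1 | apply lfun_mono; lra]).
  set (q := (1 + 3 * e1) / 2).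
  set (r := fun k => lfun S X (2 ^ k * a) / (2 ^ k * a)).
  assert (Hstep : forall b, a <= b ->
            Etail S X b <= e1 * (lfun S X b / b) + Etail S X (2 * b) /\
            lfun S X (2 * b) / (2 * b) <= q * (lfun S X b / b))
    by (intros b Hb; apply Etail_lfun_doubling; [lra | lra | apply HM; lra]).
  assert (Hpow : forall k, a <= 2 ^ k * a)
    by (intros k; assert (1 <= 2 ^ k) by (apply pow_R1_Rle; lra); nra).
  assert (Hr0 : r 0%nat = lfun S X a / a) by (unfold r; simpl; rewrite Rmult_1_l; reflexivity).
  assert (Hr0pos : 0 < r 0%nat) by (rewrite Hr0; apply Rdiv_lt_0_compat; lra).
  destruct (Htail (eps * r 0%nat / 2) ltac:(nra)) as [M' HM'].
  destruct (pow2_unbounded (M' / a)) as [K HK].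
  assert (Htel := telescope_geometric (fun k => Etail S X (2 ^ k * a)) r e1 q K ltac:(lra)
                    ltac:(unfold q; lra) ltac:(lra)).
  assert (HtK : Etail S X (2 ^ K * a) <= eps * r 0%nat / 2).
  { destruct (Etail_spec (2 ^ K * a)) as [E _]. specialize (HM' (2 ^ K * a)).
    rewrite E in HM'. apply HM'.
    apply Rmult_le_compat_r with (r := a) in HK; [|lra].
    replace (M' / a * a) with M' in HK by (field; lra). exact HK. }
  cbv beta in Htel. replace (2 ^ 0 * a) with a in Htel by (simpl; ring). rewrite <- Hr0.
  assert (Hq : e1 * r 0%nat / (1 - q) <= eps * r 0%nat / 2).
  { assert (Hq4 : 1 / 4 <= 1 - q) by (unfold q; lra).
    apply Rmult_le_reg_r with (1 - q); [lra|].
    replace (e1 * r 0%nat / (1 - q) * (1 - q)) with (e1 * r 0%nat) by (field; lra).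
    replace (eps * r 0%nat / 2 * (1 - q)) with (eps / 2 * (1 - q) * r 0%nat) by field.
    apply Rmult_le_compat_r; nra. }
  enough (Etail S X a <= e1 * r 0%nat / (1 - q) + Etail S X (2 ^ K * a)) by lra.
  apply Htel.
  - intros k. replace (2 ^ Datatypes.S k * a) with (2 * (2 ^ k * a)) by (simpl; ring).
    apply Hstep, Hpow.
  - intros k. unfold r. replace (2 ^ Datatypes.S k * a) with (2 * (2 ^ k * a)) by (simpl; ring).
    apply Hstep, Hpow.
Qed.

Lemma Etail_scaled_le a b c eps : 0 < a -> a <= b -> a <= c -> 0 <= eps ->
  Etail S X a <= eps * (lfun S X a / a) -> Etail S X c * a <= eps * lfun S X b.
Proof.
  intros Ha Hab Hac Heps HT.
  assert (H1 := Etail_antitone a c Hac).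
  assert (H2 : lfun S X a <= lfun S X b) by (apply lfun_mono; lra).
  apply Rle_trans with (eps * lfun S X a); [|apply Rmult_le_compat_l; lra].
  apply Rle_trans with (Etail S X a * a); [apply Rmult_le_compat_r; lra|].
  apply Rmult_le_compat_r with (r := a) in HT; [|lra].
  replace (eps * (lfun S X a / a) * a) with (eps * lfun S X a) in HT by (field; lra). exact HT.
Qed.

Lemma lfun_le_linear : exists C, forall s, 0 < s -> lfun S X s <= C * s.
Proof.
  destruct (Htail 1 ltac:(lra)) as [M HM]. set (m := Rmax M 1).
  assert (Hm : M <= m /\ 1 <= m) by (split; [apply Rmax_l | apply Rmax_r]).
  exists (m + 1). intros s Hspos. destruct (lfun_spec s) as [El _].
  assert (H : Rbar_le (Eh S (fun w => Rmin (X w ^ 2) (s ^ 2))) (Finite (s * m + s * 1))).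
  { apply (Eh_le_trans S _ (fun w => s * m + s * excess m (X w)));
      [apply Hs_sqr_min | apply Hs_plus; [apply Hs_const | apply Hs_scal, Hs_excess] | |].
    - intros w. assert (Rabs (X w) <= m + excess m (X w)) by (unfold excess, Rmax; destruct Rle_dec; lra).
      assert (Rmin (X w ^ 2) (s ^ 2) <= s * Rabs (X w)).
      { rewrite <- (pow2_abs (X w)). assert (0 <= Rabs (X w)) by apply Rabs_pos.
        unfold Rmin. destruct Rle_dec; nra. }
      nra.
    - apply Eh_plus_le; [apply Hs_const | apply Hs_scal, Hs_excess | rewrite Eh_const; apply Rle_refl |].
      apply Eh_scal_le; [apply Hs_excess | exact Hspos | apply HM; tauto]. }
  rewrite El in H. simpl in H. lra.
Qed.

Lemma zthreshold_spec B0 q : 0 <= B0 -> 0 < q ->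
  let z := real (Glb_Rbar (fun s => B0 + 1 <= s /\ lfun S X s / s ^ 2 <= q)) in
  B0 + 1 <= z /\ lfun S X (2 * z) <= q * (2 * z) ^ 2 /\
  (forall s, B0 + 1 <= s -> s < z -> q * s ^ 2 < lfun S X s).
Proof.
  intros HB0 Hq z.
  set (T := fun s => B0 + 1 <= s /\ lfun S X s / s ^ 2 <= q) in z.
  destruct lfun_le_linear as [C HC].
  set (s0 := Rmax (B0 + 1) (C / q)).
  assert (Hs0 : T s0).
  { assert (H1 := Rmax_l (B0 + 1) (C / q)). assert (H2 := Rmax_r (B0 + 1) (C / q)).
    split; [exact H1|]. assert (H := HC s0 ltac:(unfold s0; lra)).
    assert (HCq : C <= q * s0).
    { apply Rmult_le_compat_l with (r := q) in H2; [|lra].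
      replace (q * (C / q)) with C in H2 by (field; lra). exact H2. }
    apply Rmult_le_reg_r with (s0 ^ 2); [unfold s0; nra|].
    replace (lfun S X s0 / s0 ^ 2 * s0 ^ 2) with (lfun S X s0) by (field; unfold s0; lra).
    unfold s0 in *. nra. }
  destruct (Glb_Rbar_spec T (B0 + 1) s0 ltac:(intros s Hs; apply Hs) Hs0) as [Hz [Hlow Happrox]].
  fold z in Hz, Hlow, Happrox.
  split; [exact Hz | split].
  - destruct (Happrox (2 * z) ltac:(lra)) as [t [[Ht1 Ht2] Ht3]].
    assert (Hsc := lfun_scale t (2 * z) ltac:(lra)).
    assert (Hlt : lfun S X t <= q * t ^ 2).
    { apply Rmult_le_compat_r with (r := t ^ 2) in Ht2; [|nra].
      replace (lfun S X t / t ^ 2 * t ^ 2) with (lfun S X t) in Ht2 by (field; lra). lra. }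
    apply Rmult_le_reg_l with (t ^ 2); [nra|].
    assert (Hz2 : 0 <= (2 * z) ^ 2) by apply pow2_ge_0.
    apply Rle_trans with ((2 * z) ^ 2 * lfun S X t); [exact Hsc|].
    replace (t ^ 2 * (q * (2 * z) ^ 2)) with ((2 * z) ^ 2 * (q * t ^ 2)) by ring.
    apply Rmult_le_compat_l; assumption.
  - intros s Hs1 Hs2. apply Rnot_le_lt. intros Hle.
    assert (z <= s); [|lra]. apply Hlow. split; [exact Hs1|].
    apply Rmult_le_reg_r with (s ^ 2); [nra|].
    replace (lfun S X s / s ^ 2 * s ^ 2) with (lfun S X s) by (field; lra). lra.
Qed.

Lemma b0_spec x1 : 0 < x1 -> 0 < lfun S X x1 -> 0 <= b0 S X /\ 0 < lfun S X (b0 S X + 1).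
Proof.
  intros Hx1 Hl1.
  destruct (Glb_Rbar_spec (fun x => 0 <= x /\ 0 < lfun S X x) 0 x1
              ltac:(intros s Hs; apply Hs) ltac:(split; lra)) as [Hb0 [_ Happrox]].
  fold (b0 S X) in Hb0, Happrox. split; [exact Hb0|].
  destruct (Happrox (b0 S X + 1) ltac:(lra)) as [t [[Ht0 Ht1] Ht2]].
  eapply Rlt_le_trans; [exact Ht1 | apply lfun_mono; lra].
Qed.

End TruncatedMoments.

Definition quad_exponent (lam c t : R) := lam * t - c * lam ^ 2 * t ^ 2.

Definition exp_quad_sum (lam c : R) (n : nat) (v : nat -> R) :=
  exp (psum (fun i => quad_exponent lam c (v i)) n).

Lemma quad_exponent_le lam c t : 0 < c -> quad_exponent lam c t <= 1 / (4 * c).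
Proof.
  intros Hc. unfold quad_exponent.
  apply Rmult_le_reg_r with (4 * c); [lra|]. field_simplify; [|lra].
  assert (0 <= (2 * c * (lam * t) - 1) ^ 2) by apply pow2_ge_0. nra.
Qed.

Lemma quad_exponent_lipschitz lam c s t : 0 <= lam -> 0 <= c ->
  Rabs (quad_exponent lam c s - quad_exponent lam c t)
  <= (lam + c * lam ^ 2) * (1 + Rabs s + Rabs t) * Rabs (s - t).
Proof.
  intros Hl Hc. unfold quad_exponent.
  replace (lam * s - c * lam ^ 2 * s ^ 2 - (lam * t - c * lam ^ 2 * t ^ 2))
    with ((lam - c * lam ^ 2 * (s + t)) * (s - t)) by ring.
  rewrite Rabs_mult. apply Rmult_le_compat_r; [apply Rabs_pos|].
  assert (Hcl : 0 <= c * lam ^ 2) by (apply Rmult_le_pos; [lra | apply pow2_ge_0]).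
  eapply Rle_trans; [apply Rabs_triang|]. rewrite Rabs_Ropp, Rabs_mult, (Rabs_right lam) by lra.
  rewrite (Rabs_right (c * lam ^ 2)) by lra.
  assert (Hst := Rabs_triang s t). assert (0 <= Rabs s) by apply Rabs_pos.
  assert (0 <= Rabs t) by apply Rabs_pos. nra.
Qed.

Lemma psum_lipschitz (g : R -> R) a n x y : 0 <= a ->
  (forall s t, Rabs (g s - g t) <= a * (1 + Rabs s + Rabs t) * Rabs (s - t)) ->
  Rabs (psum (fun i => g (x i)) n - psum (fun i => g (y i)) n)
  <= INR n * a * (1 + nmax n x + nmax n y) * nmax n (vsub x y).
Proof.
  intros Ha Hg.
  assert (Hd := nmax_ge0 n (vsub x y)).
  assert (Hx0 := nmax_ge0 n x). assert (Hy0 := nmax_ge0 n y).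
  enough (forall k, (k <= n)%nat ->
    Rabs (psum (fun i => g (x i)) k - psum (fun i => g (y i)) k)
    <= INR k * (a * (1 + nmax n x + nmax n y) * nmax n (vsub x y))).
  { replace (INR n * a * (1 + nmax n x + nmax n y) * nmax n (vsub x y))
      with (INR n * (a * (1 + nmax n x + nmax n y) * nmax n (vsub x y))) by ring. auto. }
  induction k as [|k IHk]; intros Hk; cbn [psum].
  - rewrite Rminus_diag, Rabs_R0. simpl. lra.
  - rewrite S_INR.
    replace (psum (fun i => g (x i)) k + g (x k) - (psum (fun i => g (y i)) k + g (y k)))
      with ((psum (fun i => g (x i)) k - psum (fun i => g (y i)) k) + (g (x k) - g (y k))) by ring.
    eapply Rle_trans; [apply Rabs_triang|].
    assert (H1 := IHk ltac:(lia)). assert (H2 := Hg (x k) (y k)).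
    assert (Hx := nmax_ge n x k ltac:(lia)). assert (Hy := nmax_ge n y k ltac:(lia)).
    assert (Hxy := nmax_ge n (vsub x y) k ltac:(lia)). unfold vsub in Hxy.
    assert (Hk' : a * (1 + Rabs (x k) + Rabs (y k)) * Rabs (x k - y k)
                  <= a * (1 + nmax n x + nmax n y) * nmax n (vsub x y)).
    { assert (0 <= Rabs (x k)) by apply Rabs_pos. assert (0 <= Rabs (y k)) by apply Rabs_pos.
      assert (0 <= Rabs (x k - y k)) by apply Rabs_pos.
      apply Rmult_le_compat; [nra | apply Rabs_pos | apply Rmult_le_compat_l; lra | exact Hxy]. }
    lra.
Qed.

Lemma Clip_exp n (f : (nat -> R) -> R) B C : depends_on n f -> (forall v, f v <= B) -> 0 <= C ->
  (forall x y, Rabs (f x - f y) <= C * (1 + nmax n x + nmax n y) * nmax n (vsub x y)) ->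
  Clip n (fun v => exp (f v)).
Proof.
  intros Hdep HB HC Hf. split.
  - intros x y H. rewrite (Hdep x y H). reflexivity.
  - exists (exp B * C + 1), 1%nat. assert (HeB := exp_pos B).
    split; [nra|]. intros x y. rewrite !pow_1.
    eapply Rle_trans; [apply exp_lipschitz; apply HB|].
    assert (Hd := nmax_ge0 n (vsub x y)).
    assert (Hx := nmax_ge0 n x). assert (Hy := nmax_ge0 n y).
    assert (Hpos : 0 <= (1 + nmax n x + nmax n y) * nmax n (vsub x y)) by nra.
    assert (Hxy := Hf x y). nra.
Qed.

Lemma Clip_exp_quad_sum lam c n : 0 <= lam -> 0 < c -> Clip n (exp_quad_sum lam c n).
Proof.
  intros Hl Hc. apply (Clip_exp n _ (INR n * (1 / (4 * c))) (INR n * (lam + c * lam ^ 2))).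
  - intros x y H. apply psum_ext. intros i Hi. rewrite H; auto.
  - intros v. induction n as [|n IHn]; cbn [psum]; [simpl; lra|].
    rewrite S_INR. assert (H := quad_exponent_le lam c (v n) Hc). lra.
  - apply Rmult_le_pos; [apply pos_INR|]. assert (0 <= c * lam ^ 2) by (apply Rmult_le_pos; [lra | apply pow2_ge_0]). lra.
  - intros x y. apply psum_lipschitz.
    + assert (0 <= c * lam ^ 2) by (apply Rmult_le_pos; [lra | apply pow2_ge_0]). lra.
    + intros s t. apply quad_exponent_lipschitz; lra.
Qed.

Lemma Clip1_exp_quad lam c : 0 <= lam -> 0 < c -> Clip1 (fun t => exp (quad_exponent lam c t)).
Proof.
  intros Hl Hc. apply Clip1_of_Clip.
  replace (fun v : nat -> R => exp (quad_exponent lam c (v 0%nat))) with (exp_quad_sum lam c 1);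
    [apply Clip_exp_quad_sum; auto|].
  apply functional_extensionality. intros v. unfold exp_quad_sum. simpl. rewrite Rplus_0_l. reflexivity.
Qed.

(* [t |-> (1 + t) exp (-(t - c t^2))] decreases to [1] on [-eta/2, 0] and increases on [0, oo). *)
Lemma exp_quad_le_1_plus eta u : 0 < eta <= 1 -> - (eta / 2) <= u ->
  exp (u - (1 + eta) / 2 * u ^ 2) <= 1 + u.
Proof.
  intros He Hu.
  set (c := (1 + eta) / 2).
  set (psi := fun t => (1 + t) * exp (- (t - c * t ^ 2))).
  set (dpsi := fun t => exp (- (t - c * t ^ 2)) * (t * (2 * c * (1 + t) - 1))).
  assert (Hd : forall t, derivable_pt_lim psi t (dpsi t)).
  { intros t. apply is_derive_Reals. unfold psi, dpsi. auto_derive; [exact I|].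
    replace (- (t + - (c * (t * (t * 1))))) with (- (t - c * t ^ 2)) by ring. ring. }
  assert (H0 : psi 0 = 1).
  { unfold psi. replace (- (0 - c * 0 ^ 2)) with 0 by ring. rewrite exp_0. ring. }
  assert (Hge : 1 <= psi u).
  { destruct (Rtotal_order u 0) as [Hlt|[Heq|Hgt]].
    - destruct (MVT_cor2 psi dpsi u 0 Hlt (fun c0 _ => Hd c0)) as [c0 [Hc1 Hc2]].
      assert (dpsi c0 <= 0); [|nra].
      unfold dpsi. assert (0 < exp (- (c0 - c * c0 ^ 2))) by apply exp_pos.
      assert (c0 * (2 * c * (1 + c0) - 1) <= 0) by (unfold c; nra). nra.
    - subst u. lra.
    - destruct (MVT_cor2 psi dpsi 0 u Hgt (fun c0 _ => Hd c0)) as [c0 [Hc1 Hc2]].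
      assert (0 <= dpsi c0); [|nra].
      unfold dpsi. assert (0 < exp (- (c0 - c * c0 ^ 2))) by apply exp_pos.
      assert (0 <= c0 * (2 * c * (1 + c0) - 1)) by (unfold c; nra). nra. }
  unfold psi in Hge.
  assert (Hm : exp (u - c * u ^ 2) * exp (- (u - c * u ^ 2)) = 1).
  { rewrite <- exp_plus. replace (u - c * u ^ 2 + - (u - c * u ^ 2)) with 0 by ring. apply exp_0. }
  assert (0 < exp (- (u - c * u ^ 2))) by apply exp_pos.
  assert (0 < exp (u - c * u ^ 2)) by apply exp_pos.
  nra.
Qed.

Lemma exp_quad_exponent_le eta lam t : 0 < eta <= 1 -> 0 < lam ->
  exp (quad_exponent lam ((1 + eta) / 2) t) <= 1 + lam * t + 2 * lam * excess (eta / (4 * lam)) t.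
Proof.
  intros He Hl.
  assert (Hexc : 0 <= excess (eta / (4 * lam)) t) by apply Rmax_r.
  assert (Hq : quad_exponent lam ((1 + eta) / 2) t = lam * t - (1 + eta) / 2 * (lam * t) ^ 2)
    by (unfold quad_exponent; ring).
  rewrite Hq. destruct (Rle_dec (- (eta / 2)) (lam * t)) as [Hu|Hu].
  - assert (H := exp_quad_le_1_plus eta (lam * t) He Hu). nra.
  - apply Rnot_le_lt in Hu.
    assert (Hlt : exp (lam * t - (1 + eta) / 2 * (lam * t) ^ 2) <= 1).
    { rewrite <- exp_0 at 2. apply exp_le. assert (0 <= (lam * t) ^ 2) by apply pow2_ge_0. nra. }
    assert (Hge : - t - eta / (4 * lam) <= excess (eta / (4 * lam)) t).
    { unfold excess. eapply Rle_trans; [|apply Rmax_l].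
      assert (- t <= Rabs t) by (rewrite <- Rabs_Ropp; apply Rle_abs). lra. }
    assert (Hk : 2 * lam * (eta / (4 * lam)) = eta / 2) by (field; lra).
    nra.
Qed.

Lemma exp_quad_sum_upd lam c n x v :
  exp_quad_sum lam c (Datatypes.S n) (upd x n v) = exp_quad_sum lam c n x * exp (quad_exponent lam c v).
Proof.
  unfold exp_quad_sum. cbn [psum]. rewrite <- exp_plus. f_equal. f_equal.
  - apply psum_ext. intros i Hi. unfold upd. destruct (Nat.eqb_spec i n); [lia | reflexivity].
  - unfold upd. rewrite Nat.eqb_refl. reflexivity.
Qed.

Lemma psum_quad_exponent lam c a n :
  psum (fun i => quad_exponent lam c (a i)) n
  = lam * psum a n - c * lam ^ 2 * psum (fun i => a i ^ 2) n.
Proof. induction n; cbn [psum]; [ring | rewrite IHn; unfold quad_exponent; ring]. Qed.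

Lemma geometric_cell (y0 r v : R) (K : nat) : 0 < y0 -> 1 < r -> (1 <= K)%nat ->
  y0 <= v <= y0 * r ^ K -> exists k, (k < K)%nat /\ y0 * r ^ k <= v <= r * (y0 * r ^ k).
Proof.
  intros Hy Hr HK Hv. induction K as [|K IHK]; [lia|].
  destruct (Nat.eq_dec K 0) as [->|HK0].
  - exists 0%nat. simpl in *. split; [lia | lra].
  - destruct (Rle_dec v (y0 * r ^ K)) as [Hle|Hgt].
    + destruct IHK as [k [Hk1 Hk2]]; [lia | lra |]. exists k. split; [lia | exact Hk2].
    + exists K. simpl in Hv. split; [lia | lra].
Qed.

Lemma exp_quad_cell_ge_1 x y V Sm eta : 0 < x -> 0 < y -> 0 < eta ->
  y <= V <= (1 + eta) * y -> x * sqrt V <= Sm ->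
  1 <= exp (- x ^ 2 + (1 + eta) ^ 2 / 2 * x ^ 2)
       * exp ((x / sqrt y) * Sm - (1 + eta) / 2 * (x / sqrt y) ^ 2 * V).
Proof.
  intros Hx Hy He [HV1 HV2] HS.
  rewrite <- exp_plus, <- exp_0 at 1. apply exp_le.
  set (lam := x / sqrt y).
  assert (Hsy : 0 < sqrt y) by (apply sqrt_lt_R0; lra).
  assert (Hl : 0 < lam) by (unfold lam; apply Rdiv_lt_0_compat; lra).
  assert (E1 : lam * sqrt y = x) by (unfold lam; field; lra).
  assert (E2 : lam ^ 2 * y = x ^ 2)
    by (rewrite <- E1, <- (sqrt_sqrt y) at 1 by lra; ring).
  assert (Hsv : sqrt y <= sqrt V) by (apply sqrt_le_1; lra).
  assert (A : x ^ 2 <= lam * Sm).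
  { replace (x ^ 2) with (lam * (x * sqrt y)) by (rewrite <- E1; ring).
    apply Rmult_le_compat_l; [lra|]. nra. }
  assert (B : (1 + eta) / 2 * lam ^ 2 * V <= (1 + eta) ^ 2 / 2 * x ^ 2).
  { rewrite <- E2. replace ((1 + eta) ^ 2 / 2 * (lam ^ 2 * y))
      with ((1 + eta) / 2 * lam ^ 2 * ((1 + eta) * y)) by field.
    apply Rmult_le_compat_l; [|exact HV2]. assert (0 <= lam ^ 2) by apply pow2_ge_0. nra. }
  lra.
Qed.

Section Independence.

Context {Omega : Type} (S : SLE Omega) (X : Omega -> R) (Xs : nat -> Omega -> R).
Hypothesis HX : Hs S X.
Hypothesis HXs : forall n, Hs S (Xs n).
Hypothesis Hind : indep_seq S Xs.
Hypothesis Hid : forall n, ident_distr S (Xs n) X.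

Lemma Eh_exp_quad_bounded lam c : 0 <= lam -> 0 < c ->
  let m := real (Eh S (fun w => exp (quad_exponent lam c (X w)))) in
  Eh S (fun w => exp (quad_exponent lam c (X w))) = Finite m /\ 0 <= m.
Proof.
  intros Hl Hc m.
  destruct (Eh_bounded S (fun w => exp (quad_exponent lam c (X w))) 0 (exp (1 / (4 * c))))
    as [E [Hm _]].
  - apply (Hs_clip1 S X (fun t => exp (quad_exponent lam c t))); [exact HX | apply Clip1_exp_quad; auto].
  - intros w. split; [apply Rlt_le, exp_pos | apply exp_le, quad_exponent_le, Hc].
  - split; [exact E | exact Hm].
Qed.

Lemma Eh_exp_quad_sum lam c n : 0 <= lam -> 0 < c ->
  Eh S (fun w => exp_quad_sum lam c n (fun j => Xs j w))
  = Finite (real (Eh S (fun w => exp (quad_exponent lam c (X w)))) ^ n).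
Proof.
  intros Hl Hc.
  destruct (Eh_exp_quad_bounded lam c Hl Hc) as [Em Hm0].
  set (m := real (Eh S (fun w => exp (quad_exponent lam c (X w))))) in *.
  assert (Hsum : forall n, Hs S (fun w => exp_quad_sum lam c n (fun j => Xs j w)))
    by (intros k; apply (Hs_comp S k Xs); [auto | right; apply Clip_exp_quad_sum; auto]).
  induction n as [|n IHn].
  - replace (fun w => exp_quad_sum lam c 0 (fun j => Xs j w)) with (fun _ : Omega => 1).
    + rewrite Eh_const. reflexivity.
    + apply functional_extensionality. intros w. unfold exp_quad_sum. simpl. symmetry. apply exp_0.
  - assert (Hh : forall x, Eh S (fun w => exp_quad_sum lam c (Datatypes.S n) (upd x n (Xs n w)))
                           = Finite (exp_quad_sum lam c n x * m)).
    { intros x.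
      replace (fun w => exp_quad_sum lam c (Datatypes.S n) (upd x n (Xs n w)))
        with (fun w => exp_quad_sum lam c n x * exp (quad_exponent lam c (Xs n w)))
        by (apply functional_extensionality; intros w; symmetry; apply exp_quad_sum_upd).
      rewrite Eh_poshom; [| apply (Hs_clip1 S (Xs n) (fun t => exp (quad_exponent lam c t)));
                            [auto | apply Clip1_exp_quad; auto] | apply exp_pos].
      rewrite (Hid n (fun t => exp (quad_exponent lam c t))); [|apply Clip1_exp_quad; auto].
      rewrite Em. reflexivity. }
    assert (H := Hind n (exp_quad_sum lam c (Datatypes.S n)) (Clip_exp_quad_sum lam c _ Hl Hc)).
    cbv zeta beta in H.
    replace (fun w => real (Eh S (fun w0 => exp_quad_sum lam c (Datatypes.S n) (upd (fun j => Xs j w) n (Xs n w0)))))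
      with (fun w => m * exp_quad_sum lam c n (fun j => Xs j w)) in H
      by (apply functional_extensionality; intros w; rewrite Hh; simpl; ring).
    rewrite H; [| intros x; rewrite Hh; reflexivity | apply Hs_scal, Hsum].
    destruct (Req_dec m 0) as [Z|Z].
    + replace (fun w => m * exp_quad_sum lam c n (fun j => Xs j w)) with (fun _ : Omega => 0)
        by (apply functional_extensionality; intros; rewrite Z; ring).
      rewrite Eh_const, Z. simpl. f_equal. ring.
    + rewrite Eh_poshom; [| apply Hsum | lra]. rewrite IHn. reflexivity.
Qed.

Hypothesis Hmean : Eh S X = Finite 0.
Hypothesis Htail : forall eps, 0 < eps -> exists M, forall c, M <= c ->
  Rbar_le (Eh S (fun w => excess c (X w))) (Finite eps).

Lemma Eh_exp_quad_le eta lam : 0 < eta <= 1 -> 0 < lam ->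
  real (Eh S (fun w => exp (quad_exponent lam ((1 + eta) / 2) (X w))))
  <= 1 + 2 * lam * Etail S X (eta / (4 * lam)).
Proof.
  intros He Hl. set (c := (1 + eta) / 2). set (k := eta / (4 * lam)).
  destruct (Eh_exp_quad_bounded lam c ltac:(lra) ltac:(unfold c; lra)) as [Em _].
  destruct (Etail_spec S X HX Htail k) as [Ek _].
  assert (Hexc : Hs S (fun w => excess k (X w))) by (apply Hs_clip1; [exact HX | apply Clip1_excess]).
  assert (Hlin : Hs S (fun w => 1 + lam * X w)) by (apply Hs_plus; [apply Hs_const | apply Hs_scal, HX]).
  assert (Hb : Rbar_le (Eh S (fun w => exp (quad_exponent lam c (X w))))
                 (Finite (1 + 0 + 2 * lam * Etail S X k))).
  { apply (Eh_le_trans S _ (fun w => (1 + lam * X w) + 2 * lam * excess k (X w)));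
      [apply (Hs_clip1 S X (fun t => exp (quad_exponent lam c t))); [exact HX | apply Clip1_exp_quad; unfold c; lra]
      | apply Hs_plus; [exact Hlin | apply Hs_scal, Hexc]
      | intros w; apply exp_quad_exponent_le; assumption |].
    apply Eh_plus_le; [exact Hlin | apply Hs_scal, Hexc | |].
    - apply Eh_plus_le; [apply Hs_const | apply Hs_scal, HX | rewrite Eh_const; apply Rle_refl |].
      rewrite Eh_poshom, Hmean by (auto; lra). simpl. lra.
    - apply Eh_scal_le; [exact Hexc | lra | rewrite Ek; apply Rle_refl]. }
  rewrite Em in Hb. simpl in Hb. lra.
Qed.

Lemma Eh_exp_quad_sum_le eta lam n : 0 < eta <= 1 -> 0 < lam ->
  Rbar_le (Eh S (fun w => exp_quad_sum lam ((1 + eta) / 2) n (fun j => Xs j w)))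
          (Finite (exp (INR n * (2 * lam * Etail S X (eta / (4 * lam)))))).
Proof.
  intros He Hl.
  rewrite Eh_exp_quad_sum by lra. simpl.
  destruct (Eh_exp_quad_bounded lam ((1 + eta) / 2) ltac:(lra) ltac:(lra)) as [_ Hm0].
  assert (Hm := Eh_exp_quad_le eta lam He Hl).
  set (u := 2 * lam * Etail S X (eta / (4 * lam))) in *.
  assert (Hu : 0 <= u) by (unfold u; assert (H := proj2 (Etail_spec S X HX Htail (eta / (4 * lam)))); nra).
  apply Rle_trans with ((1 + u) ^ n); [apply pow_incr; lra|].
  replace (exp (INR n * u)) with (exp u ^ n).
  - apply pow_incr. split; [lra | apply exp_ineq1_le].
  - induction n as [|n IHn]; [simpl; rewrite Rmult_0_l, exp_0; reflexivity|].
    rewrite S_INR, Rmult_plus_distr_r, Rmult_1_l, exp_plus, <- IHn. simpl. ring.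
Qed.

Lemma Vcap_cells_le n x y0 eta K U (A : Omega -> Prop) :
  0 < x -> 0 < y0 -> 0 < eta <= 1 -> (1 <= K)%nat ->
  (forall lam, 0 < lam -> lam ^ 2 * y0 <= x ^ 2 ->
     INR n * (2 * lam * Etail S X (eta / (4 * lam))) <= U) ->
  (forall w, A w -> x * sqrt (V2sum Xs n w) <= Ssum Xs n w /\
                    y0 <= V2sum Xs n w <= y0 * (1 + eta) ^ K) ->
  Rbar_le (Vcap S A) (Finite (INR K * exp (- x ^ 2 + (1 + eta) ^ 2 / 2 * x ^ 2 + U))).
Proof.
  intros Hx Hy0 He HK HU HA.
  set (C0 := - x ^ 2 + (1 + eta) ^ 2 / 2 * x ^ 2).
  set (y := fun k : nat => y0 * (1 + eta) ^ k).
  assert (Hy : forall k, y0 <= y k)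
    by (intros k; unfold y; assert (1 <= (1 + eta) ^ k) by (apply pow_R1_Rle; lra); nra).
  set (lam := fun k => x / sqrt (y k)).
  assert (Hlam : forall k, 0 < lam k /\ lam k ^ 2 * y0 <= x ^ 2).
  { intros k. specialize (Hy k). assert (Hs := sqrt_lt_R0 (y k) ltac:(lra)).
    split; [apply Rdiv_lt_0_compat; lra|].
    assert (Hl2 : lam k ^ 2 = x ^ 2 / y k).
    { unfold lam, Rdiv. rewrite Rpow_mult_distr, pow_inv, pow2_sqrt by lra. reflexivity. }
    rewrite Hl2.
    apply Rmult_le_reg_r with (y k); [lra|].
    replace (x ^ 2 / y k * y0 * y k) with (x ^ 2 * y0) by (field; lra).
    apply Rmult_le_compat_l; [apply pow2_ge_0 | exact Hy]. }
  set (xi := fun k w => exp C0 * exp_quad_sum (lam k) ((1 + eta) / 2) n (fun j => Xs j w)).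
  assert (Hxi : forall k, Hs S (xi k))
    by (intros k; apply Hs_scal, (Hs_comp S n Xs); [auto | right; apply Clip_exp_quad_sum; [apply Rlt_le, Hlam | lra]]).
  assert (Hxi0 : forall k w, 0 <= xi k w)
    by (intros k w; unfold xi, exp_quad_sum; apply Rlt_le, Rmult_lt_0_compat; apply exp_pos).
  apply (Vcap_le_Eh S A (fun w => psum (fun k => xi k w) K)).
  - split; [apply Hs_psum, Hxi|]. intros w. split; [apply psum_nonneg; auto|].
    intros Hw. destruct (HA w Hw) as [HS HV].
    destruct (geometric_cell y0 (1 + eta) (V2sum Xs n w) K Hy0 ltac:(lra) HK HV) as [k [Hk Hcell]].
    apply Rle_trans with (xi k w); [|apply (psum_ge_term (fun k => xi k w)); auto].
    unfold xi, exp_quad_sum. rewrite psum_quad_exponent.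
    apply exp_quad_cell_ge_1; [lra | specialize (Hy k); unfold y in *; lra | lra | |exact HS].
    unfold V2sum, y in *. lra.
  - replace (exp (C0 + U)) with (exp C0 * exp U) by (rewrite exp_plus; reflexivity).
    apply Eh_psum_le; [exact Hxi|]. intros k _. destruct (Hlam k) as [Hl1 Hl2].
    apply Eh_scal_le; [apply (Hs_comp S n Xs); [auto | right; apply Clip_exp_quad_sum; lra] | apply exp_pos |].
    eapply Rbar_le_trans; [apply Eh_exp_quad_sum_le; auto|]. apply exp_le, HU; auto.
Qed.

End Independence.

Lemma geometric_exceeds a b eta : 0 < a -> 0 < eta ->
  exists K, (1 <= K)%nat /\ b <= a * (1 + eta) ^ K.
Proof.
  intros Ha He. destruct (INR_unbounded (b / (a * eta))) as [K0 HK0].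
  exists (Datatypes.S K0). split; [lia|].
  assert (H := poly (Datatypes.S K0) eta He). rewrite S_INR in H.
  assert (Hb : b <= a * eta * INR K0).
  { apply Rmult_le_reg_r with (/ (a * eta)); [apply Rinv_0_lt_compat; nra|].
    replace (a * eta * INR K0 * / (a * eta)) with (INR K0) by (field; lra). unfold Rdiv in HK0. lra. }
  assert (0 <= INR K0) by apply pos_INR. nra.
Qed.

Lemma cells_exponent_le K x eta eps : 0 < eta <= 1 -> eta <= eps / 4 -> 4 * INR K / eps <= x ^ 2 ->
  INR K * exp (- x ^ 2 + (1 + eta) ^ 2 / 2 * x ^ 2 + eta * x ^ 2) <= exp (- x ^ 2 / 2 + eps * x ^ 2).
Proof.
  intros He Heps HxK. assert (Hx2 : 0 <= x ^ 2) by apply pow2_ge_0.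
  assert (HK : INR K <= exp ((eps - 3 * eta) * x ^ 2)).
  { apply Rle_trans with (1 + eps / 4 * x ^ 2); [|eapply Rle_trans; [apply exp_ineq1_le | apply exp_le; nra]].
    apply Rmult_le_compat_r with (r := eps / 4) in HxK; [|lra].
    replace (4 * INR K / eps * (eps / 4)) with (INR K) in HxK by (field; lra). lra. }
  apply Rle_trans with (exp ((eps - 3 * eta) * x ^ 2) * exp (- x ^ 2 + (1 + eta) ^ 2 / 2 * x ^ 2 + eta * x ^ 2));
    [apply Rmult_le_compat_r; [apply Rlt_le, exp_pos | exact HK]|].
  rewrite <- exp_plus. apply exp_le.
  assert (eta ^ 2 * x ^ 2 <= eta * x ^ 2) by (apply Rmult_le_compat_r; nra).
  replace ((1 + eta) ^ 2 / 2 * x ^ 2) with (x ^ 2 / 2 + eta * x ^ 2 + eta ^ 2 * x ^ 2 / 2) by field.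
  nra.
Qed.

Section Asymptotics.

Context {Omega : Type} (S : SLE Omega) (X : Omega -> R) (xs : nat -> R).
Hypothesis HX : Hs S X.
Hypothesis Htail : forall eps, 0 < eps -> exists M, forall c, M <= c ->
  Rbar_le (Eh S (fun w => excess c (X w))) (Finite eps).
Variable x1 : R.
Hypothesis Hx1 : 0 < x1.
Hypothesis Hl1 : 0 < lfun S X x1.
Hypothesis Hxs_infty : forall M, exists N, forall n, (N <= n)%nat -> M <= xs n.
Hypothesis Hxs_small : forall eps, 0 < eps -> exists N, forall n, (N <= n)%nat ->
  Rabs (xs n) <= eps * sqrt (INR n).

Lemma zseq_window Z : exists N, forall n, (N <= n)%nat ->
  let z := zseq S X xs n in
  0 < xs n /\ Z <= z /\ xs n ^ 2 * z ^ 2 < 4 * (INR n * lfun S X z) /\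
  INR n * lfun S X z <= 4 * z ^ 2 * xs n ^ 2.
Proof.
  destruct (b0_spec S X HX x1 Hx1 Hl1) as [Hb0 Hlb0].
  set (B0 := b0 S X) in *. set (l1 := lfun S X (B0 + 1)) in *.
  set (Z' := Rmax (2 * (B0 + 1)) Z).
  assert (HZ' : 2 * (B0 + 1) <= Z' /\ Z <= Z') by (split; [apply Rmax_l | apply Rmax_r]).
  set (e := l1 / (8 * Z' ^ 2)).
  assert (He : 0 < e) by (unfold e; apply Rdiv_lt_0_compat; nra).
  destruct (Hxs_small (sqrt e) (sqrt_lt_R0 e He)) as [N1 HN1].
  destruct (Hxs_infty 1) as [N2 HN2].
  exists (Nat.max (Nat.max N1 N2) 1). intros n Hn z.
  specialize (HN1 n ltac:(lia)). specialize (HN2 n ltac:(lia)).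
  set (x := xs n) in *.
  assert (Hn1 : 1 <= INR n) by (apply (le_INR 1); lia).
  assert (Hxe : x ^ 2 <= e * INR n).
  { rewrite Rabs_right in HN1 by lra.
    assert (H : x ^ 2 <= (sqrt e * sqrt (INR n)) ^ 2) by (apply pow_incr; lra).
    rewrite Rpow_mult_distr, !pow2_sqrt in H by lra. exact H. }
  set (q := x ^ 2 / INR n).
  assert (Hq : 0 < q) by (unfold q; apply Rdiv_lt_0_compat; nra).
  assert (Hqe : q <= e) by (unfold q; apply Rmult_le_reg_r with (INR n); [lra|]; field_simplify; lra).
  destruct (zthreshold_spec S X HX Htail B0 q Hb0 Hq) as [Hz1 [Hz2 Hz3]].
  change (real (Glb_Rbar (fun s => B0 + 1 <= s /\ lfun S X s / s ^ 2 <= q))) with z in Hz1, Hz2, Hz3.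
  assert (HnL : forall s, INR n * (q * s ^ 2) = x ^ 2 * s ^ 2) by (intros s; unfold q; field; lra).
  assert (HzZ : Z' <= z).
  { apply Rnot_lt_le. intros Hlt.
    assert (Hl2 : l1 <= lfun S X (2 * z)) by (apply lfun_mono; auto; lra).
    assert (Hqz : q * (2 * z) ^ 2 <= e * (4 * Z' ^ 2)) by (apply Rmult_le_compat; nra).
    replace (e * (4 * Z' ^ 2)) with (l1 / 2) in Hqz by (unfold e; field; lra). lra. }
  split; [lra | split; [lra | split]].
  - assert (H := Hz3 (z / 2) ltac:(lra) ltac:(lra)).
    assert (Hm : lfun S X (z / 2) <= lfun S X z) by (apply lfun_mono; auto; lra).
    apply Rmult_lt_compat_l with (r := INR n) in H; [|lra].
    rewrite HnL in H. nra.
  - assert (Hm : lfun S X z <= lfun S X (2 * z)) by (apply lfun_mono; auto; lra).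
    apply Rle_trans with (INR n * (q * (2 * z) ^ 2)); [apply Rmult_le_compat_l; lra|].
    rewrite HnL. nra.
Qed.

Hypothesis Hcap : forall eps, 0 < eps -> exists M, forall x, M <= x ->
  Rbar_le (Vcap S (fun w => x <= Rabs (X w))) (Finite (eps * (lfun S X x / x ^ 2))).

Lemma Etail_negligible delta eta : 0 < delta < 1 -> 0 < eta <= 1 ->
  exists N, forall n, (N <= n)%nat ->
  let L := lfun S X (zseq S X xs n) in
  0 < xs n /\ 0 < INR n * L /\
  forall lam, 0 < lam -> lam ^ 2 * (delta * INR n * L) <= xs n ^ 2 ->
    INR n * (2 * lam * Etail S X (eta / (4 * lam))) <= eta * xs n ^ 2.
Proof.
  intros Hd He.
  (* [rho z <= eta / (4 lam)] as soon as [lam z delta <= 2], which the window guarantees. *)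
  set (rho := eta * delta / 8). set (epsT := eta * delta * rho / 16).
  assert (Hrho : 0 < rho <= 1) by (unfold rho; split; nra).
  assert (HepsT : 0 < epsT) by (unfold epsT; apply Rdiv_lt_0_compat; [repeat apply Rmult_lt_0_compat|]; lra).
  destruct (Etail_little_o S X HX Htail Hcap x1 Hx1 Hl1 epsT HepsT) as [A0 [HA0 HT]].
  destruct (zseq_window (A0 / rho)) as [N HN]. exists N. intros n Hn L.
  destruct (HN n Hn) as [Hx [HzA [Hlo Hup]]]. fold L in Hlo, Hup.
  set (z := zseq S X xs n) in *. set (x := xs n) in *.
  assert (Hz : 0 < z) by (apply Rlt_le_trans with (A0 / rho); [apply Rdiv_lt_0_compat|]; lra).
  assert (HnL : 0 < INR n * L) by nra.
  split; [exact Hx | split; [exact HnL|]]. intros lam Hl Hlam.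
  assert (Hlzd : lam * z * delta <= 2).
  { assert (H : lam ^ 2 * z ^ 2 * delta < 4).
    { apply Rmult_lt_reg_r with (x ^ 2); [nra|].
      apply Rlt_le_trans with (lam ^ 2 * delta * (4 * (INR n * L))).
      - replace (lam ^ 2 * z ^ 2 * delta * x ^ 2) with (lam ^ 2 * delta * (x ^ 2 * z ^ 2)) by ring.
        apply Rmult_lt_compat_l; [apply Rmult_lt_0_compat; [apply pow_lt|]; lra | exact Hlo].
      - replace (lam ^ 2 * delta * (4 * (INR n * L))) with (4 * (lam ^ 2 * (delta * INR n * L))) by ring.
        lra. }
    assert (0 < lam * z * delta) by (repeat apply Rmult_lt_0_compat; lra). nra. }
  assert (HrzA : A0 <= rho * z).
  { apply Rmult_le_compat_l with (r := rho) in HzA; [|lra].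
    replace (rho * (A0 / rho)) with A0 in HzA by (field; lra). exact HzA. }
  assert (Hrz : rho * z <= eta / (4 * lam)).
  { apply Rmult_le_reg_r with (4 * lam); [lra|].
    replace (eta / (4 * lam) * (4 * lam)) with eta by (field; lra).
    unfold rho. nra. }
  assert (HE : Etail S X (eta / (4 * lam)) * (rho * z) <= epsT * L)
    by (apply (Etail_scaled_le S X HX Htail); [nra | nra | exact Hrz | lra | apply HT, HrzA]).
  apply Rmult_le_reg_r with (rho * z); [nra|].
  replace (INR n * (2 * lam * Etail S X (eta / (4 * lam))) * (rho * z))
    with (2 * lam * INR n * (Etail S X (eta / (4 * lam)) * (rho * z))) by ring.
  apply Rle_trans with (2 * lam * INR n * (epsT * L)).
  { apply Rmult_le_compat_l; [assert (0 <= INR n) by apply pos_INR; nra | exact HE]. }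
  apply Rle_trans with (2 * lam * epsT * (4 * z ^ 2 * x ^ 2)).
  { replace (2 * lam * INR n * (epsT * L)) with (2 * lam * epsT * (INR n * L)) by ring.
    apply Rmult_le_compat_l; [nra | exact Hup]. }
  unfold epsT, rho. assert (0 <= x ^ 2) by apply pow2_ge_0.
  replace (2 * lam * (eta * delta * (eta * delta / 8) / 16) * (4 * z ^ 2 * x ^ 2))
    with ((lam * z * delta) * (eta * (eta * delta / 8) * z * x ^ 2) / 2) by field.
  assert (0 <= eta * (eta * delta / 8) * z * x ^ 2) by (repeat apply Rmult_le_pos; lra).
  nra.
Qed.

End Asymptotics.

Theorem proposition4p2 (Omega : Type) (S : SLE Omega)
  (X : Omega -> R) (Xs : nat -> Omega -> R) (xs : nat -> R)
  (HX : Hs S X) (HXs : forall n, Hs S (Xs n))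
  (Hind : indep_seq S Xs)
  (Hid : forall n, ident_distr S (Xs n) X)
  (Hmean : Eh S X = Finite 0 /\ Ecal S X = Finite 0)
  (Hnondeg : exists x, 0 < lfun S X x)
  (HI : forall eps, 0 < eps -> exists M, forall x, M <= x ->
      Rbar_le (Vcap S (fun w => x <= Rabs (X w))) (Finite (eps * (lfun S X x / x ^ 2))))
  (HII : exists C M, forall x, M <= x -> lfun S X x <= C * lcal S X x)
  (HIII : forall eps, 0 < eps -> exists M, forall c, M <= c ->
      Rbar_le (Eh S (fun w => Rmax (Rabs (X w) - c) 0)) (Finite eps))
  (HIVa : forall M, exists N, forall n, (N <= n)%nat -> M <= xs n)
  (HIVb : forall eps, 0 < eps -> exists N, forall n, (N <= n)%nat ->
      Rabs (xs n) <= eps * sqrt (INR n)) :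
  forall delta, 0 < delta < 1 ->
  forall eps, 0 < eps -> exists N, forall n, (N <= n)%nat ->
    Rbar_le
      (Vcap S (fun w =>
         xs n * sqrt (V2sum Xs n w) <= Ssum Xs n w /\
         delta * INR n * lfun S X (zseq S X xs n) <= V2sum Xs n w /\
         V2sum Xs n w <= 9 * INR n * lfun S X (zseq S X xs n)))
      (Finite (exp (- xs n ^ 2 / 2 + eps * xs n ^ 2))).
Proof.
  intros delta Hdelta eps Heps.
  destruct Hnondeg as [x0 Hx0]. rewrite <- lfun_abs in Hx0.
  assert (Habs : 0 < Rabs x0).
  { apply Rabs_pos_lt. intros ->. destruct (lfun_spec S X HX 0) as [_ H]. rewrite Rabs_R0 in Hx0. simpl in H. lra. }
  set (eta := Rmin (eps / 4) 1).
  assert (Heta : 0 < eta <= 1 /\ eta <= eps / 4)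
    by (unfold eta; split; [split; [apply Rmin_glb_lt; lra | apply Rmin_r] | apply Rmin_l]).
  destruct (geometric_exceeds delta 9 eta ltac:(lra) ltac:(lra)) as [K [HK1 HK]].
  destruct (Etail_negligible S X xs HX HIII (Rabs x0) Habs Hx0 HIVa HIVb HI delta eta Hdelta ltac:(lra))
    as [N1 HN1].
  destruct (HIVa (sqrt (4 * INR K / eps))) as [N2 HN2].
  exists (Nat.max N1 N2). intros n Hn.
  destruct (HN1 n ltac:(lia)) as [Hx [HnL HU]].
  specialize (HN2 n ltac:(lia)).
  assert (HxK : 4 * INR K / eps <= xs n ^ 2).
  { rewrite <- (pow2_sqrt (4 * INR K / eps)) by (assert (0 <= INR K) by apply pos_INR; apply Rdiv_le_0_compat; lra).
    apply pow_incr. split; [apply sqrt_pos | exact HN2]. }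
  apply Rbar_le_trans with
    (Finite (INR K * exp (- xs n ^ 2 + (1 + eta) ^ 2 / 2 * xs n ^ 2 + eta * xs n ^ 2)));
    [|apply cells_exponent_le; tauto].
  apply (Vcap_cells_le S X Xs HX HXs Hind Hid (proj1 Hmean) HIII n (xs n) (delta * INR n * lfun S X (zseq S X xs n))); [lra | nra | lra | exact HK1 | exact HU |].
  intros w [HS [Hlo Hup]]. repeat split; [exact HS | exact Hlo |]. nra.
Qed.
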